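(* Let $L$ be a finite set of vertical lines and $R$ a finite set of horizontal closed rays in the plane such that, for every horizontal line containing a ray of $R$, the rays of $R$ on that line are exactly one leftward ray and one rightward ray, and these two rays have nonempty intersection (a closed segment, possibly a single point). Let $E$ be the set of these intersection segments (one per horizontal line carrying rays). Let $G$ be the bipartite graph with vertex classes $L$ and $E$ in which $\ell\in L$ and $e\in E$ are adjacent iff $\ell\cap e\neq\emptyset$, and let $m$ be the size of a maximum matching in $G$. Then there exists a minimum-cardinality hitting set $P$ for $L\cup R$ containing $m$ points $p_1,\dots,p_m$ together with pairwise distinct lines $\ell_1,\dots,\ell_m\in L$ and pairwise distinct segments $e_1,\dots,e_m\in E$ such that $p_i\in \ell_i\cap e_i$ for all $i$.
   Context: A hitting set for a family of subsets of the plane is a finite set of points such that every member of the family contains at least one of the points. A leftward (resp. rightward) horizontal ray is a set $\{(t,b):t\le a\}$ (resp. $\{(t,b):t\ge a\}$). *)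

(* the plane is R * R for an arbitrary real field R
   (this includes the real numbers; the statement is order-theoretic). *)
From HB Require Import structures.
From mathcomp Require Import all_boot all_order all_algebra.
Set Implicit Arguments. Unset Strict Implicit. Unset Printing Implicit Defensive.
Import Order.TTheory GRing.Theory Num.Theory.
Local Open Scope ring_scope.

Section Defs.
Variable R : realFieldType.

Definition point := (R * R)%type.

Definition on_vline (a : R) (p : point) : bool := p.1 == a.

(* A horizontal closed ray is a triple (d, a, b):
   d = false : leftward ray  {(t,b) : t <= a}
   d = true  : rightward ray {(t,b) : t >= a} *)
Definition ray := (bool * R * R)%type.
Definition rdir (r : ray) : bool := r.1.1.
Definition ranchor (r : ray) : R := r.1.2.
Definition rheight (r : ray) : R := r.2.

Definition on_ray (r : ray) (p : point) : bool :=
  (p.2 == rheight r) &&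
  (if rdir r then ranchor r <= p.1 else p.1 <= ranchor r).

Definition good_rays (Rs : seq ray) : Prop :=
  uniq Rs /\
  (forall r, r \in Rs ->
     count (fun r' => (rheight r' == rheight r) && ~~ rdir r') Rs = 1%N /\
     count (fun r' => (rheight r' == rheight r) && rdir r') Rs = 1%N) /\
  (forall rl rr, rl \in Rs -> rr \in Rs -> rheight rl = rheight rr ->
     ~~ rdir rl -> rdir rr -> exists p : point, on_ray rl p && on_ray rr p).

(* The set E of intersection segments: one per horizontal line carrying rays,
   indexed by the height b of that line. *)
Definition seg_heights (Rs : seq ray) : seq R := undup [seq rheight r | r <- Rs].

Definition on_seg (Rs : seq ray) (b : R) (p : point) : Prop :=
  exists rl rr, [/\ rl \in Rs, rr \in Rs, rheight rl = b, rheight rr = b &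
     [&& ~~ rdir rl, rdir rr, on_ray rl p & on_ray rr p]].

Definition adjacent (Rs : seq ray) (a b : R) : Prop :=
  exists p : point, on_vline a p /\ on_seg Rs b p.

Definition is_matching (L : seq R) (Rs : seq ray) (M : seq (R * R)) : Prop :=
  (forall e, e \in M -> [/\ e.1 \in L, e.2 \in seg_heights Rs & adjacent Rs e.1 e.2]) /\
  uniq (unzip1 M) /\ uniq (unzip2 M).

Definition max_matching_size (L : seq R) (Rs : seq ray) (m : nat) : Prop :=
  (exists M, is_matching L Rs M /\ size M = m) /\
  (forall M, is_matching L Rs M -> (size M <= m)%N).

Definition hitting (L : seq R) (Rs : seq ray) (P : seq point) : Prop :=
  (forall a, a \in L -> exists2 p, p \in P & on_vline a p) /\
  (forall r, r \in Rs -> exists2 p, p \in P & on_ray r p).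

Definition min_hitting (L : seq R) (Rs : seq ray) (P : seq point) : Prop :=
  [/\ uniq P, hitting L Rs P &
      forall Q, uniq Q -> hitting L Rs Q -> (size P <= size Q)%N].

End Defs.

From HB Require Import structures.
From mathcomp Require Import all_boot all_order all_algebra.
From mathcomp Require Import zify lra.
From Stdlib Require Import Classical Wf_nat.
Import Order.TTheory GRing.Theory Num.Theory.
Local Open Scope ring_scope.
Set Implicit Arguments. Unset Strict Implicit. Unset Printing Implicit Defensive.

(** The segment at height [b] is an interval [[lo b, hi b]]: a point hits
    the leftward ray at height [b] iff it has that height and abscissa
    [<= hi b], and the rightward one iff its abscissa is [>= lo b].  Choosing
    one point of a hitting set on each line, every segment whose two rays are
    not both hit by these points costs an extra point; the segments whose rays
    are hit this way receive disjoint "gadgets" [(b, u, v)] of lines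
    [u <= hi b], [lo b <= v].  Conversely a packing of gadgets with disjoint
    lines and distinct segments saves one point per gadget.  Hence a minimum
    hitting set has [|L| + |E| - k] points, [k] the maximum size of a packing.
    A single gadget ([u = v]) is a point of [u] on the segment, an edge of
    [G].  While a maximum matching [M] has more edges than a maximum packing
    has singles, an augmenting path alternating between edges of [M] and
    singles exists, and exchanging along it (repairing the at most two gadgets
    meeting its ends) gives a packing that is larger or has more singles. *)

Lemma uniq_cat_disjoint (T : eqType) (s1 s2 : seq T) : uniq s1 -> uniq s2 ->
  (forall x, x \in s1 -> x \in s2 -> False) -> uniq (s1 ++ s2).
Proof.
move=> u1 u2 d; rewrite cat_uniq u1 u2 andbT /=; apply/hasPn => x x2; apply/negP => x1.
exact: (d x).
Qed.

Section SeqFacts.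
Variables T U : eqType.

Lemma uniq_map_in_eq (f : T -> U) s x y :
  uniq (map f s) -> x \in s -> y \in s -> f x = f y -> x = y.
Proof.
elim: s => //= z s IH /andP[nz us]; rewrite !inE.
move=> /orP[/eqP->|hx] /orP[/eqP->|hy] // e.
- by move: nz; rewrite e (map_f f hy).
- by move: nz; rewrite -e (map_f f hx).
- exact: IH.
Qed.

Lemma uniq_flatten_filter (f : T -> seq U) (p : pred T) s :
  uniq (flatten (map f s)) -> uniq (flatten (map f (filter p s))).
Proof.
elim: s => //= x s IH; rewrite cat_uniq => /and3P[u1 u2 u3].
case: (p x) => /=; last exact: IH.
rewrite cat_uniq u1 IH //= andbT.
apply: contra u2 => /hasP[y hy1 hy2]; apply/hasP; exists y => //.
move/flatten_mapP: hy1 => [z]; rewrite mem_filter => /andP[_ hz] hyz.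
by apply/flatten_mapP; exists z.
Qed.

Lemma uniq_flatten_mem_eq (f : T -> seq U) s g1 g2 x : uniq (flatten (map f s)) ->
  g1 \in s -> g2 \in s -> x \in f g1 -> x \in f g2 -> g1 = g2.
Proof.
elim: s => //= g s IH; rewrite cat_uniq => /and3P[u1 u2 u3].
have notin_tail h : h \in s -> x \in f h -> x \in f g -> False.
  move=> hs h1 h2; move/negP: u2; apply; apply/hasP; exists x => //.
  by apply/flatten_mapP; exists h.
rewrite !inE => /orP[/eqP e1|h1] /orP[/eqP e2|h2] x1 x2.
- by rewrite e1 e2.
- by case: (notin_tail g2) => //; rewrite -e1.
- by case: (notin_tail g1) => //; rewrite -e2.
- exact: IH.
Qed.

Lemma count_mem_flatten_le1 (f : T -> seq U) s x :
  uniq (flatten (map f s)) -> (count (fun g => x \in f g) s <= 1)%N.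
Proof.
elim: s => //= g s IH; rewrite cat_uniq => /and3P[u1 u2 u3].
case hx: (x \in f g) => /=; last by rewrite add0n IH.
suff -> : count (fun g0 => x \in f g0) s = 0%N by [].
apply/eqP; rewrite -leqn0 leqNgt -has_count; apply: contra u2 => /hasP[h hs hh].
by apply/hasP; exists x => //; apply/flatten_mapP; exists h.
Qed.

Lemma uniq_flatten_map_key (s : seq T) (f : T -> seq U) (key : U -> T) :
  uniq s -> (forall t, t \in s -> uniq (f t)) ->
  (forall t x, t \in s -> x \in f t -> key x = t) -> uniq (flatten (map f s)).
Proof.
elim: s => //= t s IH /andP[ts us] hu hk; apply: uniq_cat_disjoint.
- by apply: hu; rewrite inE eqxx.
- apply: IH => // [t' t's|t' x t's xf]; first by apply: hu; rewrite inE t's orbT.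
  by apply: hk => //; rewrite inE t's orbT.
- move=> x xt /flatten_mapP[t' t's xt'].
  have e1 := hk t x (mem_head _ _) xt.
  have e2 := hk t' x (mem_behead (s := t :: s) t's) xt'.
  by move: ts; rewrite -e1 e2 t's.
Qed.

Lemma uniq_size_has_notin (s t : seq T) :
  uniq s -> (size t < size s)%N -> exists2 x, x \in s & x \notin t.
Proof.
move=> us lt; case: (boolP (all (mem t) s)) => [/allP al|].
  by have := uniq_leq_size us al; rewrite leqNgt lt.
by move/allPn => [x hx hn]; exists x.
Qed.

Lemma count_uniq_sub (s t : seq T) : uniq s -> uniq t -> {subset t <= s} ->
  (count (predC (mem t)) s + size t = size s)%N.
Proof.
move=> us ut hsub; have := count_predC (mem t) s.
have -> : count (mem t) s = size t; last by lia.
rewrite -size_filter; apply: perm_size; apply: uniq_perm; first exact: filter_uniq.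
  exact: ut.
move=> x; rewrite mem_filter; apply/andP/idP => [[]//|h]; split => //; exact: hsub.
Qed.

Lemma count_eq1_eq (p : pred T) (s : seq T) x y :
  count p s = 1%N -> x \in s -> p x -> y \in s -> p y -> x = y.
Proof.
move=> c1 xs px ys py; apply/eqP; apply/negP => nxy.
have := count_predUI (predI p (pred1 x)) (predI p (pred1 y)) s.
have -> : count (predI (predI p (pred1 x)) (predI p (pred1 y))) s = 0%N.
  apply/eqP; rewrite -leqn0 leqNgt -has_count; apply/hasPn => z _ /=.
  by apply/negP => /andP[/andP[_ /eqP ->] /andP[_ /eqP e]]; rewrite e eqxx in nxy.
have h1 : (0 < count (predI p (pred1 x)) s)%N.
  by rewrite -has_count; apply/hasP; exists x; rewrite //= px eqxx.
have h2 : (0 < count (predI p (pred1 y)) s)%N.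
  by rewrite -has_count; apply/hasP; exists y; rewrite //= py eqxx.
have h3 : (count (predU (predI p (pred1 x)) (predI p (pred1 y))) s <= count p s)%N.
  by apply: sub_count => z /= /orP[] /andP[].
by move: h1 h2 h3; rewrite c1; lia.
Qed.

End SeqFacts.

Lemma count_predI_split (T : Type) (a p : pred T) (s : seq T) :
  count a s = (count (predI a p) s + count (predI a (predC p)) s)%N.
Proof. elim: s => //= x s ->; case: (a x) (p x) => [] [] /=; lia. Qed.

Lemma count_predU_leq (T : Type) (a b : pred T) s :
  (count (predU a b) s <= count a s + count b s)%N.
Proof. have := count_predUI a b s; lia. Qed.

Lemma size_flatten_map_map (T U V : Type) (f : T -> seq U) (h : T -> U -> V) s :
  size (flatten [seq [seq h g x | x <- f g] | g <- s]) = size (flatten (map f s)).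
Proof. by elim: s => //= g s IH; rewrite !size_cat size_map IH. Qed.

Section Gadgets.
Variable R : realFieldType.
Variables (L E : seq R) (lo hi : R -> R).

Definition hits (Q : seq (R * R)) :=
  (forall a, a \in L -> exists2 p, p \in Q & p.1 = a) /\
  (forall b, b \in E -> (exists2 p, p \in Q & (p.2 == b) && (p.1 <= hi b)) /\
                        (exists2 p, p \in Q & (p.2 == b) && (lo b <= p.1))).

Definition adj a b := [&& a \in L, b \in E, lo b <= a & a <= hi b].

(* A gadget [(b, u, v)] carries the points [(u, b)] and [(v, b)]. *)
Definition gadget := (R * R * R)%type.
Definition gseg (g : gadget) := g.1.1.
Definition gleft (g : gadget) := g.1.2.
Definition gright (g : gadget) := g.2.
Definition glines (g : gadget) := undup [:: gleft g; gright g].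
Definition gsingle (g : gadget) := gleft g == gright g.

Definition gadget_ok (g : gadget) := [&& gseg g \in E, gleft g \in L, gright g \in L,
  gleft g <= hi (gseg g) & lo (gseg g) <= gright g].

Definition packing (F : seq gadget) :=
  [&& all gadget_ok F, uniq (map gseg F) & uniq (flatten (map glines F))].

Definition nsingles (F : seq gadget) := count gsingle F.
Definition single_line (F : seq gadget) a :=
  has (fun g => gsingle g && (gleft g == a)) F.
Definition single_seg (F : seq gadget) b :=
  has (fun g => gsingle g && (gseg g == b)) F.

Lemma gadgetE g : g = (gseg g, gleft g, gright g).
Proof. by case: g => [[]]. Qed.

Lemma mem_glines x g : (x \in glines g) = (x == gleft g) || (x == gright g).
Proof. by rewrite mem_undup !inE. Qed.

Lemma glines_single g : gsingle g -> glines g = [:: gleft g].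
Proof. by rewrite /gsingle /glines => /eqP <- /=; rewrite inE eqxx. Qed.

Lemma gsingle_diag b a : gsingle (b, a, a).
Proof. exact: eqxx. Qed.

Lemma single_lineP F a :
  reflect (exists2 g, g \in F & gsingle g /\ gleft g = a) (single_line F a).
Proof.
apply: (iffP hasP) => [[g hg /andP[s /eqP e]]|[g hg [s e]]]; exists g => //.
by rewrite s e eqxx.
Qed.

Lemma single_segP F b :
  reflect (exists2 g, g \in F & gsingle g /\ gseg g = b) (single_seg F b).
Proof.
apply: (iffP hasP) => [[g hg /andP[s /eqP e]]|[g hg [s e]]]; exists g => //.
by rewrite s e eqxx.
Qed.

Lemma packing_filter F (p : pred gadget) : packing F -> packing (filter p F).
Proof.
case/and3P=> h1 h2 h3; apply/and3P; split.
- by apply/allP=> g; rewrite mem_filter => /andP[_ /(allP h1)].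
- apply: subseq_uniq h2; apply: map_subseq; exact: filter_subseq.
- exact: uniq_flatten_filter.
Qed.

Lemma packing_ok F g : packing F -> g \in F -> gadget_ok g.
Proof. by case/and3P=> /allP h _ _ /h. Qed.

Lemma packing_uniq F : packing F -> uniq F.
Proof. by case/and3P=> _ /map_uniq. Qed.

Lemma packing_line_eq F g1 g2 x : packing F -> g1 \in F -> g2 \in F ->
  x \in glines g1 -> x \in glines g2 -> g1 = g2.
Proof. by case/and3P=> _ _ h; apply: uniq_flatten_mem_eq h. Qed.

Lemma packing_seg_eq F g1 g2 :
  packing F -> g1 \in F -> g2 \in F -> gseg g1 = gseg g2 -> g1 = g2.
Proof. by case/and3P=> _ h _; apply: uniq_map_in_eq h. Qed.

Lemma packing_size F : packing F -> uniq E -> (size F <= size E)%N.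
Proof.
case/and3P=> h1 h2 _ _; rewrite -(size_map gseg); apply: uniq_leq_size => //.
by move=> b /mapP[g hg ->]; case/and5P: (allP h1 g hg).
Qed.

Lemma count_packing_seg F (t : seq R) :
  packing F -> (count (fun g => gseg g \in t) F <= size t)%N.
Proof.
move=> vF; rewrite -size_filter -(size_map gseg); apply: uniq_leq_size.
  case/and3P: vF => _ u _; apply: subseq_uniq u; apply: map_subseq; exact: filter_subseq.
by move=> b /mapP[g]; rewrite mem_filter => /andP[h _] ->.
Qed.

Lemma count_packing_line F a :
  packing F -> (count (fun g => a \in glines g) F <= 1)%N.
Proof. by case/and3P => _ _; apply: count_mem_flatten_le1. Qed.

Lemma nsingles_rem F g : packing F -> g \in F -> gsingle g ->
  nsingles (filter (predC1 g) F) = (nsingles F).-1.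
Proof.
move=> vF gF sg; rewrite /nsingles count_filter [count gsingle F](count_predI_split _ (pred1 g)).
have -> : count (predI gsingle (pred1 g)) F = count_mem g F.
  by apply: eq_count => x /=; case: eqP => [->|]; rewrite ?sg ?andbF.
by rewrite count_uniq_mem ?gF //; apply: packing_uniq.
Qed.

Hypothesis uniq_L : uniq L.
Hypothesis uniq_E : uniq E.
Hypothesis lo_le_hi : forall b, b \in E -> lo b <= hi b.

Section HittingToPacking.
Variable Q : seq (R * R).
Hypothesis hits_Q : hits Q.

Definition line_point a := nth (0, 0) Q (find (fun p : R * R => p.1 == a) Q).
Definition left_hit b a := ((line_point a).2 == b) && ((line_point a).1 <= hi b).
Definition right_hit b a := ((line_point a).2 == b) && (lo b <= (line_point a).1).
Definition line_hit b := has (left_hit b) L && has (right_hit b) L.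
Definition left_line b := nth 0 L (find (left_hit b) L).
Definition right_line b := nth 0 L (find (right_hit b) L).
Definition hitting_packing :=
  [seq (b, left_line b, right_line b) | b <- filter line_hit E].

Lemma line_pointP a : a \in L -> line_point a \in Q /\ (line_point a).1 = a.
Proof.
case: hits_Q => hl _ aL; have [p pQ e] := hl a aL.
have hs : has (fun p : R * R => p.1 == a) Q by apply/hasP; exists p => //; rewrite e.
split; first by apply: mem_nth; rewrite -has_find.
by apply/eqP; apply: (nth_find (0, 0) hs).
Qed.

Lemma left_lineP b : line_hit b -> left_line b \in L /\ left_hit b (left_line b).
Proof.
case/andP=> h _; split; first by apply: mem_nth; rewrite -has_find.
exact: nth_find.
Qed.

Lemma right_lineP b : line_hit b -> right_line b \in L /\ right_hit b (right_line b).
Proof.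
case/andP=> _ h; split; first by apply: mem_nth; rewrite -has_find.
exact: nth_find.
Qed.

Lemma packing_hitting_packing : packing hitting_packing.
Proof.
apply/and3P; split.
- apply/allP => g /mapP[b]; rewrite mem_filter => /andP[hb bE] ->.
  have [xL /andP[_ h1]] := left_lineP hb; have [yL /andP[_ h2]] := right_lineP hb.
  rewrite (line_pointP xL).2 in h1; rewrite (line_pointP yL).2 in h2.
  by rewrite /gadget_ok /gseg /gleft /gright /= bE xL yL h1 h2.
- by rewrite -map_comp map_id_in ?filter_uniq.
- rewrite -map_comp; apply: (uniq_flatten_map_key (key := fun x => (line_point x).2)).
  + exact: filter_uniq.
  + by move=> t _; exact: undup_uniq.
  + move=> b x; rewrite mem_filter => /andP[hb bE] /=.
    rewrite mem_glines /gleft /gright /=.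
    have [_ /andP[/eqP h1 _]] := left_lineP hb; have [_ /andP[/eqP h2 _]] := right_lineP hb.
    by case/orP => /eqP ->.
Qed.

Definition seg_point b :=
  nth (0, 0) Q (find (fun p : R * R => (p.2 == b) && (p \notin map line_point L)) Q).

Lemma seg_pointP b : b \in E -> ~~ line_hit b ->
  seg_point b \in Q /\ ((seg_point b).2 == b) && (seg_point b \notin map line_point L).
Proof.
case: hits_Q => _ hr bE nhit.
have hs : has (fun p : R * R => (p.2 == b) && (p \notin map line_point L)) Q.
  have [[p1 p1Q h1] [p2 p2Q h2]] := hr b bE.
  move: nhit; rewrite /line_hit negb_and => /orP[] nh.
    apply/hasP; exists p1 => //; case/andP: (h1) => -> _ /=.
    apply/negP => /mapP[a aL ea]; case/negP: nh; apply/hasP; exists a => //.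
    by rewrite /left_hit -ea h1.
  apply/hasP; exists p2 => //; case/andP: (h2) => -> _ /=.
  apply/negP => /mapP[a aL ea]; case/negP: nh; apply/hasP; exists a => //.
  by rewrite /right_hit -ea h2.
split; first by apply: mem_nth; rewrite -has_find.
exact: (nth_find (0, 0) hs).
Qed.

Lemma size_hitting_packing : (size L + size E <= size Q + size hitting_packing)%N.
Proof.
pose X := map line_point L ++ map seg_point (filter (predC line_hit) E).
have uX : uniq X.
  apply: uniq_cat_disjoint.
  - rewrite map_inj_in_uniq // => a1 a2 h1 h2 e.
    by rewrite -(line_pointP h1).2 -(line_pointP h2).2 e.
  - rewrite map_inj_in_uniq; first exact: filter_uniq.
    move=> b1 b2; rewrite !mem_filter => /andP[n1 h1] /andP[n2 h2] e.
    have /andP[/eqP e1 _] := (seg_pointP h1 n1).2.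
    have /andP[/eqP e2 _] := (seg_pointP h2 n2).2.
    by rewrite -e1 -e2 e.
  - move=> x xL /mapP[b]; rewrite mem_filter => /andP[nb bE] ex.
    by have /andP[_ h] := (seg_pointP bE nb).2; move: h; rewrite -ex xL.
have sX : {subset X <= Q}.
  move=> x; rewrite mem_cat => /orP[/mapP[a aL ->]|/mapP[b]].
    exact: (line_pointP aL).1.
  by rewrite mem_filter => /andP[nb bE] ->; exact: (seg_pointP bE nb).1.
have := uniq_leq_size uX sX; rewrite size_cat !size_map !size_filter.
by rewrite -(count_predC line_hit E) addnCA [(size Q + _)%N]addnC leq_add2l.
Qed.

End HittingToPacking.

Lemma packing_of_hitting Q : hits Q ->
  exists F, packing F /\ (size L + size E <= size Q + size F)%N.
Proof.
move=> hQ; exists (hitting_packing Q).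
by split; [exact: packing_hitting_packing | exact: size_hitting_packing].
Qed.

Section PackingToHitting.
Variable F : seq gadget.
Hypothesis packing_F : packing F.

Definition used_lines := flatten (map glines F).
Definition gadget_points := flatten [seq [seq (x, gseg g) | x <- glines g] | g <- F].
Definition free_line_points : seq (R * R) :=
  [seq (a, 0) | a <- L & a \notin used_lines].
Definition free_seg_points := [seq (lo b, b) | b <- E & b \notin map gseg F].
Definition packing_points :=
  undup (gadget_points ++ free_line_points ++ free_seg_points).

Lemma gadget_points_mem g x : g \in F -> x \in glines g -> (x, gseg g) \in packing_points.
Proof.
move=> gF xg; rewrite mem_undup mem_cat; apply/orP; left.
by apply/flatten_mapP; exists g => //; exact: map_f.
Qed.

Lemma hits_packing_points : hits packing_points.
Proof.
have [aok _ _] := and3P packing_F.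
split.
  move=> a aL; case: (boolP (a \in used_lines)) => [/flatten_mapP[g gF ag]|na].
    by exists (a, gseg g); rewrite // gadget_points_mem.
  exists (a, 0%R) => //; rewrite mem_undup !mem_cat; apply/orP; right; apply/orP; left.
  by apply: map_f; rewrite mem_filter na.
move=> b bE; case: (boolP (b \in map gseg F)) => [/mapP[g gF ->]|nb].
  have /and5P[_ _ _ h1 h2] := allP aok g gF.
  split.
    exists (gleft g, gseg g); first by rewrite gadget_points_mem // mem_glines eqxx.
    by rewrite /= eqxx h1.
  exists (gright g, gseg g); first by rewrite gadget_points_mem // mem_glines eqxx orbT.
  by rewrite /= eqxx h2.
have pE : (lo b, b) \in packing_points.
  rewrite mem_undup !mem_cat; apply/orP; right; apply/orP; right.
  by apply: map_f; rewrite mem_filter nb.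
by split; exists (lo b, b) => //=; rewrite eqxx ?lo_le_hi ?lexx.
Qed.

Lemma size_packing_points : (size packing_points + size F <= size L + size E)%N.
Proof.
have [aok uh ul] := and3P packing_F.
apply: (@leq_trans (size (gadget_points ++ free_line_points ++ free_seg_points) + size F)).
  by rewrite leq_add2r size_undup.
have usedL : {subset used_lines <= L}.
  move=> x /flatten_mapP[g gF]; have /and5P[_ h1 h2 _ _] := allP aok g gF.
  by rewrite mem_glines => /orP[]/eqP->.
have segE : {subset map gseg F <= E}.
  by move=> x /mapP[g gF ->]; have /and5P[-> _ _ _ _] := allP aok g gF.
have s1 := count_uniq_sub uniq_L ul usedL.
have s2 := count_uniq_sub uniq_E uh segE.
rewrite !size_cat size_flatten_map_map !size_map !size_filter -/used_lines.
move: s1 s2; rewrite size_map /used_lines.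
move: (count _ L) (count _ E) (size (flatten _)) (size F) (size L) (size E).
by clear; lia.
Qed.

End PackingToHitting.

(* [alt_path e F [:: a0; ...; ak] [:: b0; ...; bk]] : each [(ai, bi)] is an
   [e]-edge and each [(bi, a(i+1), a(i+1))] a single gadget of [F]. *)
Fixpoint alt_path (e : R -> R -> bool) (F : seq gadget) (As Bs : seq R) {struct As} :=
  match As, Bs with
  | a :: As', b :: Bs' =>
      e a b && (if As' is a' :: _ then ((b, a', a') \in F) && alt_path e F As' Bs'
                else nilp Bs')
  | _, _ => false
  end.

Lemma alt_path_cons e F As Bs : alt_path e F As Bs ->
  exists a As' b Bs', As = a :: As' /\ Bs = b :: Bs'.
Proof. by case: As Bs => [|a As'] [|b Bs'] //= _; exists a, As', b, Bs'. Qed.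

Lemma alt_path_last_mem e F As Bs : alt_path e F As Bs -> last 0 Bs \in Bs.
Proof. by case/alt_path_cons => [a [As' [b [Bs' [_ ->]]]]] /=; apply: mem_last. Qed.

Lemma alt_path_mono (e e' : R -> R -> bool) F F' As Bs :
  (forall a b, e a b -> e' a b) -> {subset F <= F'} ->
  alt_path e F As Bs -> alt_path e' F' As Bs.
Proof.
move=> he hF; elim: As Bs => [|a As IH] [|b Bs] //= /andP[h1 h2].
rewrite he //=; case: As IH h2 => [|a' As] IH //= /andP[h3 h4].
by rewrite hF //=; exact: IH.
Qed.

Lemma alt_path_size e F As Bs : alt_path e F As Bs -> size As = size Bs.
Proof.
elim: As Bs => [|a As IH] [|b Bs] //= /andP[_].
by case: As IH => [|a' As] IH /=; [move/nilP->|case/andP=> _ /IH <-].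
Qed.

Lemma alt_path_edge e F As Bs b : alt_path e F As Bs -> b \in Bs -> exists a, e a b.
Proof.
elim: As Bs => [|a As IH] [|b' Bs] //= /andP[h1 h2]; rewrite inE => /orP[/eqP->|hb].
  by exists a.
case: As IH h2 => [|a' As] IH /=; first by move/nilP=> e0; move: hb; rewrite e0.
by case/andP=> _ /IH; apply.
Qed.

Lemma alt_path_edges e F As Bs :
  alt_path e F As Bs -> all (fun ab => e ab.1 ab.2) (zip As Bs).
Proof.
elim: As Bs => [|a As IH] [|b Bs] //= /andP[-> /=].
by case: As IH => [|a' As] IH /=; [move/nilP->|case/andP=> _ /IH].
Qed.

Lemma alt_path_last e F As Bs : alt_path e F As Bs -> e (last 0 As) (last 0 Bs).
Proof.
elim: As Bs => [|a As IH] [|b Bs] //= /andP[h].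
case: As IH => [|a' As] IH /=; first by move/nilP->.
case/andP=> _ hp; have {}hp : alt_path e F (a' :: As) Bs := hp.
have [a2 [As2 [b2 [Bs2 [eA eB]]]]] := alt_path_cons hp.
by move: (IH _ hp); rewrite eB.
Qed.

Lemma alt_path_tail e F As Bs x : alt_path e F As Bs -> x \in behead As ->
  exists2 b, b \in Bs & (b, x, x) \in F.
Proof.
elim: As Bs => [|a As IH] [|b Bs] //= /andP[_].
case: As IH => [|a' As] IH //= /andP[h1 h2]; rewrite inE => /orP[/eqP->|hx].
  by exists b; rewrite ?inE ?eqxx.
by have [b' hb' hF] := IH _ h2 hx; exists b' => //; rewrite inE hb' orbT.
Qed.

Lemma alt_path_uniq_tail F As Bs e :
  packing F -> alt_path e F As Bs -> uniq Bs -> uniq (behead As).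
Proof.
move=> vF; elim: As Bs => [|a As IH] [|b Bs] //= /andP[_].
case: As IH => [|a' As] IH //= /andP[h1 h2] /andP[nb uB].
have {}h2 : alt_path e F (a' :: As) Bs := h2.
rewrite (IH _ h2 uB) andbT; apply/negP=> hA; have [b' hb' hF] := alt_path_tail h2 hA.
have [eb] : (b, a', a') = (b', a', a').
  by apply: (packing_line_eq (x := a') vF) => //; rewrite mem_glines eqxx.
by move: nb; rewrite eb hb'.
Qed.

Lemma alt_path_uniq F As Bs e : packing F -> alt_path e F As Bs -> uniq Bs ->
  ~~ single_line F (head 0 As) -> uniq As.
Proof.
move=> vF pa uB nsl; have [a0 [As1 [b0 [Bs1 [eA _]]]]] := alt_path_cons pa.
rewrite eA /=; apply/andP; split; last by have := alt_path_uniq_tail vF pa uB; rewrite eA.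
apply/negP=> ha; have [b _ hF] : exists2 b, b \in Bs & (b, a0, a0) \in F.
  by apply: alt_path_tail pa _; rewrite eA.
case/negP: nsl; rewrite eA; apply/single_lineP; exists (b, a0, a0) => //.
by split; [exact: gsingle_diag|].
Qed.

Lemma exists_nonsingle_line F (M : seq (R * R)) : uniq (unzip1 M) ->
  (nsingles F < size M)%N -> exists2 a, a \in unzip1 M & ~~ single_line F a.
Proof.
move=> u1 lt; have [a aM an] : exists2 a, a \in unzip1 M &
    a \notin [seq gleft g | g <- F & gsingle g].
  by apply: uniq_size_has_notin; rewrite // !size_map size_filter.
exists a => //; apply: contra an => /single_lineP[g gF [sg <-]].
by apply: map_f; rewrite mem_filter sg.
Qed.

Lemma augmenting_path F (M : seq (R * R)) : packing F ->
  uniq (unzip1 M) -> uniq (unzip2 M) -> (nsingles F < size M)%N ->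
  exists As Bs, [/\ alt_path (fun a b => (a, b) \in M) F As Bs,
    ~~ single_line F (head 0 As), ~~ single_seg F (last 0 Bs) & uniq Bs].
Proof.
have [n] := ubnP (size M); elim: n M F => // n IH M F szM vF u1 u2 lt.
have [_ /mapP[[a0 b1] abM /= ->] nsl] := exists_nonsingle_line u1 lt.
have [/single_segP[g1 g1F [sg1 hg1]]|nsh] := boolP (single_seg F b1); last first.
  by exists [:: a0], [:: b1]; split => //=; rewrite abM.
(* Otherwise the edge [(a0, b1)] continues with the single gadget on [b1]:
   remove both and recurse. *)
have g1E : g1 = (b1, gleft g1, gleft g1) by rewrite {1}(gadgetE g1) hg1 -(eqP sg1).
set F1 := filter (predC1 g1) F; set M1 := filter (predC1 (a0, b1)) M.
have szM1 : size M1 = (size M).-1 by rewrite /M1 -rem_filter ?size_rem //; apply: map_uniq u1.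
have nsF1 : nsingles F1 = (nsingles F).-1 by apply: nsingles_rem.
have nsF : (0 < nsingles F)%N by rewrite /nsingles -has_count; apply/hasP; exists g1.
have u1' : uniq (unzip1 M1) by apply: subseq_uniq u1; apply/map_subseq/filter_subseq.
have u2' : uniq (unzip2 M1) by apply: subseq_uniq u2; apply/map_subseq/filter_subseq.
have [||As [Bs [pa hn ln uB]]] := IH M1 F1 _ (packing_filter _ vF) u1' u2'.
- by rewrite szM1; move: szM lt; lia.
- by rewrite nsF1 szM1; move: lt nsF; lia.
have b1B : b1 \notin Bs.
  apply/negP=> /(alt_path_edge pa) [a]; rewrite mem_filter => /andP[ne aM].
  by move: ne; rewrite /= (uniq_map_in_eq u2 aM abM erefl) eqxx.
have [a' [As' [b' [Bs' [eA eB]]]]] := alt_path_cons pa.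
have subF : {subset F1 <= F} by move=> x; rewrite mem_filter => /andP[].
have paM : alt_path (fun a b => (a, b) \in M) F As Bs.
  by apply: alt_path_mono pa => // a b; rewrite mem_filter => /andP[].
have nshF : ~~ single_seg F (last 0 Bs).
  apply: contra ln => /single_segP[g gF [sg hg]]; apply/single_segP; exists g => //.
  rewrite mem_filter gF andbT; apply/eqP=> egg; subst g.
  by move: b1B; rewrite -hg1 hg (alt_path_last_mem pa).
have [ea'|na'] := eqVneq a' (gleft g1).
  exists (a0 :: As), (b1 :: Bs); split => //=.
  - by rewrite abM /= eA -eA paM andbT ea' -g1E.
  - by move: nshF; rewrite eB.
  - by rewrite b1B uB.
exists As, Bs; split => //.
apply: contra hn => /single_lineP[g gF [sg hg]]; apply/single_lineP; exists g => //.
rewrite mem_filter gF andbT; apply/eqP=> egg; subst g.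
by move: na'; rewrite hg eA eqxx.
Qed.

Definition between (a l w : R) := ((a <= w) && (w <= l)) || ((l <= w) && (w <= a)).

(* Consecutive lines [ai], [a(i+1)] of an [adj]-path both meet segment [bi],
   hence so does every line between them and the path can be restarted there. *)
Lemma alt_path_cut F As Bs w : packing F -> alt_path adj F As Bs -> w \in L ->
  between (head 0 As) (last 0 As) w ->
  exists As' Bs', [/\ alt_path adj F (w :: As') Bs', subseq Bs' Bs & last 0 Bs' = last 0 Bs].
Proof.
move=> vF; elim: As Bs => [|a As IH] [|b Bs] //= /andP[hab].
case: As IH => [|a' As] IH /=.
  move/nilP=> -> wL hw; exists [::], [:: b]; split; rewrite /= ?eqxx ?andbT //.
  suff -> : w = a by [].
  by move: hw; rewrite /between /= => /orP[] /andP[h1 h2]; apply/eqP; rewrite eq_le ?h1 ?h2.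
case/andP=> hF hp wL hw; have {}hp : alt_path adj F (a' :: As) Bs := hp.
have /and5P[_ _ _ ga4 ga5] := packing_ok vF hF.
rewrite /gseg /gleft /gright /= in ga4 ga5.
case/and4P: hab => _ hb hab3 hab4.
have [hw1|hw1] := boolP (between a a' w).
  exists (a' :: As), (b :: Bs); split; [| by rewrite eqxx subseq_refl | by []].
  rewrite hF hp !andbT /adj wL hb /=.
  by move: hw1; rewrite /between => /orP[] /andP[h1 h2]; apply/andP; split; lra.
have hw2 : between a' (last a' As) w.
  move: hw hw1; rewrite /between /=.
  case: (lerP a w); case: (lerP w a'); case: (lerP w (last a' As));
    case: (lerP (last a' As) w); rewrite /= ?andbT ?andbF //=; lra.
have [As' [Bs' [p2 s2 l2]]] := IH Bs hp wL hw2.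
exists As', Bs'; split => //; first exact: subseq_trans s2 (subseq_cons Bs b).
by have [a3 [As3 [b3 [Bs3 [_ eB]]]]] := alt_path_cons hp; rewrite l2 eB.
Qed.

Definition path_singles (As Bs : seq R) : seq gadget :=
  [seq (ab.2, ab.1, ab.1) | ab <- zip As Bs].

Lemma path_singles_segs As Bs : size As = size Bs -> map gseg (path_singles As Bs) = Bs.
Proof. by move=> e; rewrite -map_comp; apply: unzip2_zip; rewrite e. Qed.

Lemma path_singles_lines As Bs :
  size As = size Bs -> flatten (map glines (path_singles As Bs)) = As.
Proof.
move=> e; have -> : map glines (path_singles As Bs) = [seq [:: ab.1] | ab <- zip As Bs].
  by rewrite -map_comp; apply: eq_map => ab; rewrite /= /glines /= inE eqxx.
by rewrite flatten_map1; apply: unzip1_zip; rewrite e.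
Qed.

Lemma nsingles_path_singles As Bs :
  size As = size Bs -> nsingles (path_singles As Bs) = size As.
Proof.
move=> e; rewrite /nsingles count_map (eq_count (a2 := predT)) => [|ab]; last exact: eqxx.
by rewrite count_predT size_zip e minnn.
Qed.

Section Exchange.
Variables (F : seq gadget) (As Bs : seq R).
Hypothesis packing_F : packing F.
Hypothesis path_AB : alt_path adj F As Bs.
Hypothesis uniq_Bs : uniq Bs.
Hypothesis head_free : ~~ single_line F (head 0 As).
Hypothesis last_free : ~~ single_seg F (last 0 Bs).

(* The gadgets of [F] that do not touch the path: its singles [(bi, a(i+1))]
   sit on path segments, and the only other line of the path is its head. *)
Definition kept g := (gseg g \notin Bs) && (head 0 As \notin glines g).

Lemma kept_line_notin g x : g \in F -> kept g -> x \in glines g -> x \notin As.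
Proof.
move=> gF /andP[gB hA] xg; have [a0 [As1 [b0 [Bs1 [eA _]]]]] := alt_path_cons path_AB.
apply/negP; rewrite eA inE => /orP[/eqP ex|xA1].
  by move: hA; rewrite eA /= -ex xg.
have [b hb hF] : exists2 b, b \in Bs & (b, x, x) \in F.
  by apply: alt_path_tail path_AB _; rewrite eA.
have eg : g = (b, x, x) by apply: (packing_line_eq (x := x) packing_F) => //; rewrite mem_glines eqxx.
by move: gB; rewrite eg /gseg /= hb.
Qed.

(* A non-kept single lies on a segment of the path other than the last one. *)
Lemma count_single_not_kept : (count (predI gsingle (predC kept)) F < size As)%N.
Proof.
rewrite -size_filter -(size_map gseg) (alt_path_size path_AB).
have lB := alt_path_last_mem path_AB.
apply: (@leq_trans (size (filter (predC1 (last 0 Bs)) Bs)).+1).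
  rewrite ltnS; apply: uniq_leq_size.
    case/and3P: packing_F => _ u _; apply: subseq_uniq u.
    exact/map_subseq/filter_subseq.
  move=> b /mapP[g]; rewrite mem_filter => /andP[/andP[sg nk] gF] ->.
  have gB : gseg g \in Bs.
    move: nk; rewrite /= /kept negb_and !negbK => /orP[//|].
    rewrite glines_single // inE => /eqP e; case/negP: head_free; apply/single_lineP.
    by exists g.
  rewrite mem_filter gB andbT /=; apply/eqP => e; case/negP: last_free.
  by apply/single_segP; exists g.
by rewrite -rem_filter // size_rem //; move: lB; case: (Bs).
Qed.

Definition exchange R0 := filter kept F ++ path_singles As Bs ++ R0.

Section Repair.
Variable R0 : seq gadget.
Hypothesis packing_R0 : packing R0.
Hypothesis R0_segs : forall g, g \in R0 ->
  gseg g \notin Bs /\ forall g', g' \in F -> kept g' -> gseg g' != gseg g.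
Hypothesis R0_lines : forall x g, g \in R0 -> x \in glines g ->
  x \notin As /\ forall g', g' \in F -> kept g' -> x \notin glines g'.

Lemma packing_exchange : packing (exchange R0).
Proof.
have eS := alt_path_size path_AB.
have [k1 k2 k3] := and3P (packing_filter kept packing_F).
have [r1 r2 r3] := and3P packing_R0.
apply/and3P; split.
- rewrite !all_cat k1 r1 /= andbT /path_singles all_map.
  apply: sub_all (alt_path_edges path_AB) => ab /= /and4P[h1 h2 h3 h4].
  by rewrite /gadget_ok /gseg /gleft /gright /= h1 h2 h3 h4.
- rewrite !map_cat path_singles_segs //; apply: uniq_cat_disjoint => //.
    apply: uniq_cat_disjoint => // b bB /mapP[g gR eb]; subst b.
    by have [h _] := R0_segs gR; rewrite bB in h.
  move=> b /mapP[g]; rewrite mem_filter => /andP[kg gF] ->.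
  rewrite mem_cat => /orP[hb|/mapP[g0 g0R e0]]; first by case/andP: kg; rewrite hb.
  by have [_ h] := R0_segs g0R; move: (h g gF kg); rewrite e0 eqxx.
- rewrite !map_cat !flatten_cat path_singles_lines //.
  apply: uniq_cat_disjoint => //.
    apply: uniq_cat_disjoint => //; first exact: alt_path_uniq path_AB uniq_Bs head_free.
    move=> x xA /flatten_mapP[g gR xg].
    by have [h _] := R0_lines gR xg; rewrite xA in h.
  move=> x /flatten_mapP[g]; rewrite mem_filter => /andP[kg gF] xg.
  rewrite mem_cat => /orP[xA|/flatten_mapP[g0 g0R xg0]].
    by move: xA; rewrite (negbTE (kept_line_notin gF kg xg)).
  by have [_ h] := R0_lines g0R xg0; move: (h g gF kg); rewrite xg.
Qed.

Lemma exchange_improves : (count (predC kept) F <= size As + size R0)%N ->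
  exists F', [/\ packing F', (size F <= size F')%N & (nsingles F < nsingles F')%N].
Proof.
move=> cnt; exists (exchange R0); split; first exact: packing_exchange.
  rewrite !size_cat size_filter /path_singles size_map size_zip -(alt_path_size path_AB) minnn.
  by have := count_predC kept F; move: cnt; move: (count _ F) (count _ F); clear; lia.
have := nsingles_path_singles (alt_path_size path_AB).
rewrite /nsingles !count_cat => ->.
rewrite count_filter [count gsingle F](count_predI_split _ kept).
have := count_single_not_kept.
by move: (count _ F) (count _ F) (size As) (count _ R0); clear; lia.
Qed.

End Repair.

Lemma improve_head_on_path :
  (forall g, g \in F -> head 0 As \in glines g -> gseg g \in Bs) ->
  exists F', [/\ packing F', (size F <= size F')%N & (nsingles F < nsingles F')%N].
Proof.
move=> hin; apply: (exchange_improves (R0 := [::])) => //.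
rewrite /= addn0 (alt_path_size path_AB) (eq_in_count (a2 := fun g => gseg g \in Bs)).
  exact: count_packing_seg.
move=> g gF /=; rewrite /kept negb_and !negbK.
by case: (boolP (head 0 As \in glines g)) => h; rewrite ?orbF // orbT (hin g gF h).
Qed.

Lemma improve_unmatched_end : last 0 Bs \notin map gseg F ->
  exists F', [/\ packing F', (size F <= size F')%N & (nsingles F < nsingles F')%N].
Proof.
move=> nbj; apply: (exchange_improves (R0 := [::])) => //.
set t := filter (predC1 (last 0 Bs)) Bs.
rewrite (eq_in_count (a2 := predU (fun g => gseg g \in t) (fun g => head 0 As \in glines g))).
  apply: leq_trans (count_predU_leq _ _ _) _.
  have h1 := count_packing_seg t packing_F.
  have h2 := count_packing_line (head 0 As) packing_F.
  have h3 : size t = (size Bs).-1.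
    by rewrite /t -rem_filter // size_rem // (alt_path_last_mem path_AB).
  have h4 : (0 < size Bs)%N by case: (Bs) (alt_path_last_mem path_AB).
  rewrite /= addn0 (alt_path_size path_AB); move: h1 h2 h3 h4.
  by move: (count _ F) (count _ F) (size t) (size Bs); clear; lia.
move=> g gF /=; rewrite /kept negb_and !negbK /t mem_filter /=.
have [e|] //= := eqVneq (gseg g) (last 0 Bs).
by move: nbj; rewrite -e map_f.
Qed.

(* The gadget [gc] through the head of the path and the gadget [gj] on its last
   segment are both destroyed by the exchange; [g0] on the segment of [gc],
   built from their remaining lines, repairs the loss. *)
Lemma improve_repair gc gj g0 :
  gc \in F -> head 0 As \in glines gc -> gseg gc \notin Bs -> ~~ gsingle gc ->
  gj \in F -> gseg gj = last 0 Bs -> ~~ gsingle gj ->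
  gseg g0 = gseg gc -> gadget_ok g0 ->
  (forall x, x \in glines g0 ->
     (x \in glines gj) || ((x \in glines gc) && (x != head 0 As))) ->
  exists F', [/\ packing F', (size F <= size F')%N & (nsingles F < nsingles F')%N].
Proof.
move=> gcF a0c hcB ngc gjF ej ngj e0 ok0 l0.
have [a0 [As1 [b0 [Bs1 [eA eB]]]]] := alt_path_cons path_AB.
have lB := alt_path_last_mem path_AB.
have a0c' : a0 \in glines gc by move: a0c; rewrite eA.
have kept_other g : g \in F -> kept g -> g != gc /\ g != gj.
  move=> gF /andP[h1 h2]; split; apply/eqP => eg; subst g; first by rewrite a0c in h2.
  by rewrite ej lB in h1.
have nonsingle_tail x g : g \in F -> ~~ gsingle g -> x \in glines g -> x \in behead As -> False.
  move=> gF sg xg xA; have [b hb hF] := alt_path_tail path_AB xA.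
  have eg : g = (b, x, x).
    by apply: (packing_line_eq (x := x) packing_F gF hF xg); rewrite mem_glines eqxx.
  by move: sg; rewrite eg /gsingle /gleft /gright /= eqxx.
apply: (exchange_improves (R0 := [:: g0])).
- by rewrite /packing /= ok0 /= cats0 /glines undup_uniq.
- move=> g; rewrite inE => /eqP -> {g}; rewrite e0; split => // g' g'F kg.
  apply/negP => /eqP e1; have [h _] := kept_other g' g'F kg.
  by rewrite (packing_seg_eq packing_F g'F gcF e1) eqxx in h.
- move=> x g; rewrite inE => /eqP -> {g} xg; have := l0 x xg.
  case/orP=> [xj|/andP[xc xa]]; split.
  + rewrite eA inE negb_or; apply/andP; split.
      apply/eqP => ex; subst x; have egc := packing_line_eq packing_F gjF gcF xj a0c'.
      by move: hcB; rewrite -egc ej lB.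
    by apply/negP => xA; apply: (nonsingle_tail x gj) => //; rewrite eA.
  + move=> g' g'F kg; apply/negP => xg'; have [_ h] := kept_other g' g'F kg.
    by rewrite (packing_line_eq packing_F g'F gjF xg' xj) eqxx in h.
  + rewrite eA inE negb_or; apply/andP; split; first by move: xa; rewrite eA.
    by apply/negP => xA; apply: (nonsingle_tail x gc) => //; rewrite eA.
  + move=> g' g'F kg; apply/negP => xg'; have [h _] := kept_other g' g'F kg.
    by rewrite (packing_line_eq packing_F g'F gcF xg' xc) eqxx in h.
- apply: (@leq_trans (count (fun g => gseg g \in Bs) F +
                      count (fun g => head 0 As \in glines g) F)).
    apply: leq_trans (count_predU_leq _ _ _); apply: sub_count => g /=.
    by rewrite /kept negb_and !negbK.
  have h1 := count_packing_seg Bs packing_F.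
  have h2 := count_packing_line (head 0 As) packing_F.
  rewrite (alt_path_size path_AB) /=; move: h1 h2.
  by move: (count _ F) (count _ F) (size Bs); clear; lia.
Qed.

End Exchange.

Lemma improve_shortcut F As Bs gj w : packing F -> alt_path adj F As Bs -> uniq Bs ->
  ~~ single_seg F (last 0 Bs) ->
  gj \in F -> gseg gj = last 0 Bs -> ~~ gsingle gj -> w \in glines gj ->
  between (head 0 As) (last 0 As) w ->
  exists F', [/\ packing F', (size F <= size F')%N & (nsingles F < nsingles F')%N].
Proof.
move=> vF pa uB nsh gjF ej ngj wj hw.
have wL : w \in L.
  have /and5P[_ h1 h2 _ _] := packing_ok vF gjF.
  by move: wj; rewrite mem_glines => /orP[]/eqP->.
have [As' [Bs' [p2 s2 l2]]] := alt_path_cut vF pa wL hw.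
apply: (improve_head_on_path vF p2 (subseq_uniq s2 uB)); rewrite ?l2 //=.
- apply/negP => /single_lineP [g gF [sg eg]].
  have gw : w \in glines g by rewrite mem_glines eg eqxx.
  by move: ngj; rewrite -(packing_line_eq vF gF gjF gw wj) sg.
- move=> g gF gw; rewrite (packing_line_eq vF gF gjF gw wj) ej -l2.
  exact: alt_path_last_mem p2.
Qed.

Definition gnormal g := gsingle g || ((gleft g < lo (gseg g)) && (hi (gseg g) < gright g)).

(* Either the line of [gj] on the side of the head of the path still reaches
   the segment of [gc], which can then be repaired with it, or it lies strictly
   between the two ends of the path. *)
Lemma improve_crossing F As Bs gc gj : packing F -> alt_path adj F As Bs -> uniq Bs ->
  ~~ single_line F (head 0 As) -> ~~ single_seg F (last 0 Bs) ->
  gc \in F -> head 0 As \in glines gc -> gseg gc \notin Bs -> ~~ gsingle gc -> gnormal gc ->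
  gj \in F -> gseg gj = last 0 Bs -> ~~ gsingle gj -> gnormal gj ->
  exists F', [/\ packing F', (size F <= size F')%N & (nsingles F < nsingles F')%N].
Proof.
move=> vF pa uB nsl nsh gcF a0c hcB ngc nc gjF ej ngj nj.
have /and5P[cE cuL cvL cu cv] := packing_ok vF gcF.
have /and5P[jE juL jvL ju jv] := packing_ok vF gjF.
move: nc nj; rewrite /gnormal (negbTE ngc) (negbTE ngj) /= => /andP[xc yc] /andP[xj yj].
have hl := lo_le_hi cE.
have /and4P[_ _ la1 la2] := alt_path_last pa; rewrite -ej in la1 la2.
have repair := improve_repair vF pa uB nsl nsh gcF a0c hcB ngc gjF ej ngj.
have := a0c; rewrite mem_glines => /orP[/eqP a0u | /eqP a0v].
- have [hu|hu] := lerP (gleft gj) (hi (gseg gc)).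
    apply: (repair (gseg gc, gleft gj, gright gc)) => //.
      by rewrite /gadget_ok /gseg /gleft /gright /= cE juL cvL hu cv.
    move=> x; rewrite mem_glines /gleft /gright /= => /orP[/eqP->|/eqP->].
      by rewrite mem_glines eqxx.
    apply/orP; right; rewrite mem_glines eqxx orbT /= a0u eq_sym; exact: ngc.
  apply: (improve_shortcut vF pa uB nsh gjF ej ngj (w := gleft gj)).
    by rewrite mem_glines eqxx.
  by rewrite /between a0u; apply/orP; left; apply/andP; split; lra.
- have [hv|hv] := lerP (lo (gseg gc)) (gright gj).
    apply: (repair (gseg gc, gleft gc, gright gj)) => //.
      by rewrite /gadget_ok /gseg /gleft /gright /= cE cuL jvL cu hv.
    move=> x; rewrite mem_glines /gleft /gright /= => /orP[/eqP->|/eqP->].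
      apply/orP; right; rewrite mem_glines eqxx /= a0v; exact: ngc.
    by rewrite mem_glines eqxx orbT.
  apply: (improve_shortcut vF pa uB nsh gjF ej ngj (w := gright gj)).
    by rewrite mem_glines eqxx orbT.
  by rewrite /between a0v; apply/orP; right; apply/andP; split; lra.
Qed.

Lemma improve_path F As Bs : packing F -> all gnormal F ->
  alt_path adj F As Bs -> uniq Bs ->
  ~~ single_line F (head 0 As) -> ~~ single_seg F (last 0 Bs) ->
  exists F', [/\ packing F', (size F <= size F')%N & (nsingles F < nsingles F')%N].
Proof.
move=> vF /allP nF pa uB nsl nsh.
have [/hasP[gc gcF a0c]|/hasPn none] := boolP (has (fun g => head 0 As \in glines g) F);
  last by apply: (improve_head_on_path vF pa) => // g gF h; move: (none g gF); rewrite h.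
have [hcB|hcB] := boolP (gseg gc \in Bs).
  by apply: (improve_head_on_path vF pa) => // g gF h; rewrite (packing_line_eq vF gF gcF h a0c).
have ngc : ~~ gsingle gc.
  apply/negP => sc; case/negP: nsl; apply/single_lineP; exists gc => //; split => //.
  by move: a0c; rewrite glines_single // inE => /eqP.
have [/mapP[gj gjF ej]|nbj] := boolP (last 0 Bs \in map gseg F);
  last exact: (improve_unmatched_end vF pa).
have ngj : ~~ gsingle gj by apply: contra nsh => sj; apply/single_segP; exists gj.
exact: (improve_crossing vF pa uB nsl nsh gcF a0c hcB ngc (nF gc gcF) gjF (esym ej) ngj (nF gj gjF)).
Qed.

Lemma normalize_step F g w : packing F -> g \in F -> ~~ gsingle g ->
  w \in glines g -> adj w (gseg g) ->
  exists F', [/\ packing F', size F' = size F & nsingles F' = (nsingles F).+1].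
Proof.
move=> vF gF ng wg hadj; exists ((gseg g, w, w) :: filter (predC1 g) F).
have [k1 k2 k3] := and3P (packing_filter (predC1 g) vF).
split.
- apply/and3P; split.
  + rewrite /= k1 andbT; case/and4P: hadj => h1 h2 h3 h4.
    by rewrite /gadget_ok /gseg /gleft /gright /= h1 h2 h3 h4.
  + rewrite /= k2 andbT; apply/mapP => [[g' g'F e]].
    move: g'F; rewrite mem_filter => /andP[ne g'F].
    by move: ne; rewrite /= (packing_seg_eq vF g'F gF (esym e)) eqxx.
  + rewrite /= {1}/glines /= inE eqxx /= k3 andbT.
    apply/negP => /flatten_mapP[g']; rewrite mem_filter => /andP[ne g'F] wg'.
    by move: ne; rewrite /= (packing_line_eq vF g'F gF wg' wg) eqxx.
- rewrite /= -rem_filter ?size_rem ?(packing_uniq vF) //.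
  by case: (F) gF.
- rewrite /nsingles /= gsingle_diag add1n count_filter; congr S.
  apply: eq_count => x /=.
  by case: (eqVneq x g) => [->|]; rewrite ?(negbTE ng) ?andbT ?andbF.
Qed.

Lemma improve_step F (M : seq (R * R)) : packing F ->
  (forall ab, ab \in M -> adj ab.1 ab.2) ->
  uniq (unzip1 M) -> uniq (unzip2 M) -> (nsingles F < size M)%N ->
  exists F', [/\ packing F', (size F <= size F')%N &
                (size F + nsingles F < size F' + nsingles F')%N].
Proof.
move=> vF hM u1 u2 lt.
have [nF|/allPn[g gF]] := boolP (all gnormal F).
  have [As [Bs [pa nsl nsh uB]]] := augmenting_path vF u1 u2 lt.
  have pa' : alt_path adj F As Bs by apply: alt_path_mono pa => // a b /hM.
  have [F' [v' s' n']] := improve_path vF nF pa' uB nsl nsh.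
  by exists F'; split => //; move: s' n'; move: (size F) (size F') (nsingles F) (nsingles F');
    clear; lia.
rewrite /gnormal negb_or => /andP[ns].
have /and5P[gE guL gvL hgu hgv] := packing_ok vF gF.
rewrite negb_and -!leNgt => /orP[h|h].
  have [|//|F' [v' s' n']] := normalize_step vF gF ns (w := gleft g).
    by rewrite mem_glines eqxx.
    by rewrite /adj guL gE h hgu.
  by exists F'; rewrite s' n' addnS.
have [|//|F' [v' s' n']] := normalize_step vF gF ns (w := gright g).
  by rewrite mem_glines eqxx orbT.
  by rewrite /adj gvL gE h hgv.
by exists F'; rewrite s' n' addnS.
Qed.

Lemma improve_until_matched F (M : seq (R * R)) : packing F ->
  (forall ab, ab \in M -> adj ab.1 ab.2) -> uniq (unzip1 M) -> uniq (unzip2 M) ->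
  exists F', [/\ packing F', (size F <= size F')%N & (size M <= nsingles F')%N].
Proof.
move=> vF hM u1 u2.
have [n] := ubnP (2 * size E - (size F + nsingles F))%N.
elim: n F vF => // n IH F vF lt.
have [h|h] := leqP (size M) (nsingles F); first by exists F.
have [F1 [v1 s1 w1]] := improve_step vF hM u1 u2 h.
have b1 := packing_size v1 uniq_E.
have b2 : (nsingles F1 <= size F1)%N by apply: count_size.
have [|F2 [v2 s2 m2]] := IH F1 v1.
  move: lt b1 b2 w1; move: (size F) (nsingles F) (size F1) (nsingles F1) (size E).
  by clear; lia.
by exists F2; split => //; exact: leq_trans s1 s2.
Qed.

Lemma exists_min_hits :
  exists Q, [/\ uniq Q, hits Q & forall Q', uniq Q' -> hits Q' -> (size Q <= size Q')%N].
Proof.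
pose has_hitting n := exists Q, [/\ uniq Q, hits Q & size Q = n].
have [|n [[[Q [uQ hQ <-]] Qmin] _]] :=
  dec_inh_nat_subset_has_unique_least_element has_hitting (fun n => classic _).
  exists (size (packing_points [::])), (packing_points [::]).
  by split; [exact: undup_uniq | apply: hits_packing_points |].
by exists Q; split => // Q' uQ' hQ'; apply/ssrnat.leP/Qmin; exists Q'.
Qed.

Lemma min_hits_with_singles (M : seq (R * R)) : (forall ab, ab \in M -> adj ab.1 ab.2) ->
  uniq (unzip1 M) -> uniq (unzip2 M) ->
  exists P, [/\ uniq P, hits P, forall Q, uniq Q -> hits Q -> (size P <= size Q)%N &
    exists S, [/\ packing S, all gsingle S, (size M <= size S)%N &
                  {subset [seq (gleft g, gseg g) | g <- S] <= P}]].
Proof.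
move=> hM u1 u2.
have [Q0 [uQ0 hQ0 Q0min]] := exists_min_hits.
have [F0 [vF0 sF0]] := packing_of_hitting hQ0.
have [F1 [vF1 sF1 nF1]] := improve_until_matched vF0 hM u1 u2.
exists (packing_points F1); split.
- exact: undup_uniq.
- exact: hits_packing_points.
- move=> Q uQ hQ; have := Q0min Q uQ hQ; have := size_packing_points vF1.
  by move: sF0 sF1; move: (size L) (size E) (size Q0) (size F0) (size F1); clear; lia.
exists (filter gsingle F1); split.
- exact: packing_filter.
- exact: filter_all.
- by rewrite size_filter.
move=> p /mapP[g]; rewrite mem_filter => /andP[sg gF ->].
by apply: gadget_points_mem; rewrite // glines_single // mem_head.
Qed.

Lemma single_adj g : gadget_ok g -> gsingle g -> adj (gleft g) (gseg g).
Proof. by case/and5P=> h1 h2 _ h4 h5 /eqP e; rewrite /adj h1 h2 h4 e h5. Qed.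

Lemma packing_singles_uniq S : packing S -> all gsingle S ->
  uniq (map gleft S) /\ uniq (map gseg S).
Proof.
case/and3P=> _ uh ul /allP sS; split => //; move: ul.
have -> : map glines S = [seq [:: gleft g] | g <- S].
  by apply/eq_in_map => g /sS /glines_single.
by rewrite flatten_map1.
Qed.

End Gadgets.

Section Rays.
Variable R : realFieldType.
Variable Rs : seq (ray R).
Hypothesis good_Rs : good_rays Rs.

Definition lray b := nth (false, 0, 0) Rs (find (fun r => (rheight r == b) && ~~ rdir r) Rs).
Definition rray b := nth (false, 0, 0) Rs (find (fun r => (rheight r == b) && rdir r) Rs).
Definition seg_hi b := ranchor (lray b).
Definition seg_lo b := ranchor (rray b).

Lemma seg_heightsP b : b \in seg_heights Rs -> exists2 r, r \in Rs & rheight r = b.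
Proof. by rewrite /seg_heights mem_undup => /mapP[r rR ->]; exists r. Qed.

Lemma mem_seg_heights r : r \in Rs -> rheight r \in seg_heights Rs.
Proof. by move=> rR; rewrite /seg_heights mem_undup map_f. Qed.

Lemma lrayP b : b \in seg_heights Rs ->
  [/\ lray b \in Rs, rheight (lray b) = b & ~~ rdir (lray b)].
Proof.
move=> /seg_heightsP[r rR hr]; case: good_Rs => _ [hc _]; have [c1 _] := hc r rR.
have hs : has (fun r => (rheight r == b) && ~~ rdir r) Rs by rewrite has_count -hr c1.
have /andP[/eqP e d] := nth_find (false, 0, 0) hs; split => //.
by apply: mem_nth; rewrite -has_find.
Qed.

Lemma rrayP b : b \in seg_heights Rs ->
  [/\ rray b \in Rs, rheight (rray b) = b & rdir (rray b)].
Proof.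
move=> /seg_heightsP[r rR hr]; case: good_Rs => _ [hc _]; have [_ c1] := hc r rR.
have hs : has (fun r => (rheight r == b) && rdir r) Rs by rewrite has_count -hr c1.
have /andP[/eqP e d] := nth_find (false, 0, 0) hs; split => //.
by apply: mem_nth; rewrite -has_find.
Qed.

Lemma lray_uniq r : r \in Rs -> ~~ rdir r -> r = lray (rheight r).
Proof.
move=> rR dr; have [l1 l2 l3] := lrayP (mem_seg_heights rR).
case: good_Rs => _ [hc _]; have [c1 _] := hc r rR.
by apply: (count_eq1_eq c1) => //=; rewrite ?l2 eqxx.
Qed.

Lemma rray_uniq r : r \in Rs -> rdir r -> r = rray (rheight r).
Proof.
move=> rR dr; have [l1 l2 l3] := rrayP (mem_seg_heights rR).
case: good_Rs => _ [hc _]; have [_ c1] := hc r rR.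
by apply: (count_eq1_eq c1) => //=; rewrite ?l2 eqxx.
Qed.

Lemma seg_lo_le_hi b : b \in seg_heights Rs -> seg_lo b <= seg_hi b.
Proof.
move=> bE; have [l1 l2 l3] := lrayP bE; have [r1 r2 r3] := rrayP bE.
case: good_Rs => _ [_ hp]; have [p /andP[h1 h2]] := hp _ _ l1 r1 (etrans l2 (esym r2)) l3 r3.
move: h1 h2; rewrite /on_ray (negbTE l3) r3 => /andP[_ a1] /andP[_ a2].
exact: le_trans a2 a1.
Qed.

Lemma on_segP b (p : point R) : on_seg Rs b p <->
  [&& b \in seg_heights Rs, p.2 == b, seg_lo b <= p.1 & p.1 <= seg_hi b].
Proof.
split.
  move=> [rl [rr [rlR rrR hl hr /and4P[dl dr ol or]]]].
  have bE : b \in seg_heights Rs by rewrite -hl mem_seg_heights.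
  have el : rl = lray b by rewrite {1}(lray_uniq rlR dl) hl.
  have er : rr = rray b by rewrite {1}(rray_uniq rrR dr) hr.
  move: ol or; rewrite /on_ray (negbTE dl) dr hl => /andP[-> h1] /andP[_ h2].
  by rewrite bE /seg_lo /seg_hi -el -er h1 h2.
case/and4P => bE pb h1 h2; have [l1 l2 l3] := lrayP bE; have [r1 r2 r3] := rrayP bE.
exists (lray b), (rray b); split => //.
by rewrite l3 r3 /on_ray (negbTE l3) r3 l2 r2 pb h1 h2.
Qed.

Lemma vline_seg_adj (L : seq R) a b : a \in L -> b \in seg_heights Rs ->
  (exists p, on_vline a p /\ on_seg Rs b p) -> adj L (seg_heights Rs) seg_lo seg_hi a b.
Proof.
move=> aL bE [p [/eqP e /on_segP/and4P[_ _ l1 l2]]].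
by rewrite /adj aL bE -e l1 l2.
Qed.

Lemma adj_on_seg (L : seq R) a b :
  adj L (seg_heights Rs) seg_lo seg_hi a b -> on_seg Rs b (a, b).
Proof. by case/and4P=> _ bE h1 h2; apply/on_segP; rewrite bE eqxx h1 h2. Qed.

Lemma hittingP (L : seq R) (Q : seq (point R)) :
  hitting L Rs Q <-> hits L (seg_heights Rs) seg_lo seg_hi Q.
Proof.
split.
  move=> [hl hr]; split=> [a aL|b bE]; first by have [p pQ /eqP e] := hl a aL; exists p.
  have [l1 l2 l3] := lrayP bE; have [r1 r2 r3] := rrayP bE.
  split.
    by have [p pQ] := hr _ l1; rewrite /on_ray (negbTE l3) l2 => h; exists p.
  by have [p pQ] := hr _ r1; rewrite /on_ray r3 r2 => h; exists p.
move=> [hl hr]; split=> [a aL|r rR].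
  by have [p pQ e] := hl a aL; exists p; rewrite // /on_vline e.
have [[p1 p1Q h1] [p2 p2Q h2]] := hr _ (mem_seg_heights rR).
have [d|d] := boolP (rdir r).
  exists p2 => //; rewrite (rray_uniq rR d).
  by have [_ r2 r3] := rrayP (mem_seg_heights rR); rewrite /on_ray r3 r2.
exists p1 => //; rewrite (lray_uniq rR d).
by have [_ l2 l3] := lrayP (mem_seg_heights rR); rewrite /on_ray (negbTE l3) l2.
Qed.

End Rays.

Unset Implicit Arguments.
Set Strict Implicit.

Theorem mainTheorem7 (R : realFieldType) (L : seq R) (Rs : seq (ray R)) (m : nat)
  (hL : uniq L) (hR : good_rays Rs) (hm : max_matching_size L Rs m) :
  exists P : seq (point R), min_hitting L Rs P /\
  exists T : seq (point R * R * R),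
    [/\ size T = m,
        uniq [seq t.1.1 | t <- T],
        uniq [seq t.1.2 | t <- T],
        uniq [seq t.2 | t <- T] &
        forall t, t \in T ->
          [/\ t.1.1 \in P, t.1.2 \in L, t.2 \in seg_heights Rs,
              on_vline t.1.2 t.1.1 & on_seg Rs t.2 t.1.1]].
Proof.
have [[M [[hM [u1 u2]] <-]] _] := hm.
have [|P [uP hP Pmin [S [vS sS szS SP]]]] :=
  min_hits_with_singles hL (undup_uniq _) (seg_lo_le_hi hR) (M := M) _ u1 u2.
  by move=> ab /hM[aL bE]; apply: vline_seg_adj.
exists P; split.
  split => // [|Q uQ hQ]; first exact/(hittingP hR).
  by apply: Pmin uQ _; apply/(hittingP hR).
have [ulS usS] := packing_singles_uniq vS sS.
exists (take (size M) [seq ((gleft g, gseg g), gleft g, gseg g) | g <- S]).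
rewrite !map_take -!map_comp; split.
- by rewrite size_takel // size_map.
- by apply/take_uniq/(map_uniq (f := snd)); rewrite -map_comp.
- exact: take_uniq.
- exact: take_uniq.
move=> t /mem_take /mapP[g gS ->] /=.
have adj_g := single_adj (packing_ok vS gS) (allP sS g gS).
have /and4P[gL gE _ _] := adj_g.
split => //; [exact/SP/map_f | exact: eqxx | exact: adj_on_seg adj_g].
Qed.
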